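(* Let $q=p^r\ge 3$ and let $h,\bar h,t\in\mathbb{F}_q[x]$ be $$h(x)=\sum_{k=0}^{q-3}(k+1)x^k,\qquad \bar h(x)=1+x+\sum_{k=0}^{q-2}(-k)x^k,\qquad t(x)=x+\sum_{k=0}^{q-2}x^k .$$ Then: (1) $h(x^{q-2})\equiv \bar h(x) \pmod{x^q-x}$; (2) $\bar h(t(x))\equiv \bar h(x)\pmod{x^q-x}$.
   Context: $\mathbb{F}_q$ is the finite field with $q=p^r$ elements, $p$ prime. The integer coefficients $k+1$ and $-k$ are read in $\mathbb{F}_q$. Congruence modulo $x^q-x$ means the two polynomials induce the same function $\mathbb{F}_q\to\mathbb{F}_q$. *)

From HB Require Import structures.
From mathcomp Require Import all_boot all_order all_algebra all_field.
Set Implicit Arguments. Unset Strict Implicit. Unset Printing Implicit Defensive.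
Import GRing.Theory.
Local Open Scope ring_scope.

(* Congruence modulo x^q - x over F_q (q = #|F|): the two polynomials
   induce the same function F -> F. *)
Definition congr_xqx (F : finFieldType) (P Q : {poly F}) : Prop :=
  forall a : F, P.[a] = Q.[a].

Definition hpoly (F : finFieldType) : {poly F} :=
  \sum_(k < #|F| - 2) (k.+1)%:R *: 'X^k.

Definition hbarpoly (F : finFieldType) : {poly F} :=
  1 + 'X + \sum_(k < #|F| - 1) (- (k%:R)) *: 'X^k.

Definition tpoly (F : finFieldType) : {poly F} :=
  'X + \sum_(k < #|F| - 1) 'X^k.

From HB Require Import structures.
From mathcomp Require Import all_boot all_order all_algebra all_field.
From mathcomp Require Import ring.
Import GRing.Theory.
Local Open Scope ring_scope.

(* Write q = #|F| and n = q - 1.  Everything reduces to the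
   two power sums
     G(a) = sum_{k<n} a^k      and      S(a) = sum_{k<n} k a^k,
   for which hbar(a) = 1 + a - S(a), t(a) = a + G(a) and b h(b) = S(b).
   Since a^n = 1 for a <> 0, the (weighted) geometric series formulas give
   G(a) = 0 and S(a) = 1/(1 - a) when a <> 0, 1; moreover G(0) = 1, S(0) = 0,
   G(1) = n = -1, and S(1) = C(q - 1, 2) = 1, the last because the
   characteristic divides C(q, 2) when q >= 3.
   Hence t fixes every a <> 0, 1 and swaps 0 and 1, where hbar takes the
   value 1: this is (2).  For (1), x^(q-2) is a^(-1) at a <> 0, and both
   sides equal a^2 / (a - 1) there, while both equal 1 at a = 0 and a = 1.
   The file first proves the ring identities on power sums, then the
   arithmetic of q in F, then the values of G and S, and finally the two
   congruences. *)

Section PowerSums.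
Context {R : comNzRingType}.

Lemma weighted_geometric_sum (a : R) m :
  (1 - a) * \sum_(k < m) (k%:R * a ^+ k) =
  \sum_(k < m) a ^+ k - 1 + a ^+ m - m%:R * a ^+ m.
Proof.
elim: m => [|m IHm]; first by rewrite !big_ord0 expr0 mulr0 mulr0n mul0r; ring.
by rewrite !big_ord_recr /= mulrDr IHm exprSr -natr1; ring.
Qed.

(* Multiplying sum_{k<m} (k+1) b^k by b shifts it to sum_{k<m+1} k b^k; this
   links h to the weighted sum S. *)
Lemma mul_shifted_weighted_sum (b : R) m :
  b * \sum_(k < m) ((k.+1)%:R * b ^+ k) = \sum_(k < m.+1) (k%:R * b ^+ k).
Proof.
rewrite big_ord_recl mul0r add0r mulr_sumr.
by apply: eq_bigr => i _; rewrite /= exprS /bump leq0n add1n; ring.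
Qed.

End PowerSums.

Section FiniteField.
Variable F : finFieldType.
Hypothesis card_ge3 : (3 <= #|F|)%N.

Lemma card_char_power :
  {p : nat & {m : nat | p \in [pchar F] /\ #|F| = (p ^ m.+1)%N}}.
Proof.
have [p _ charFp] := finPcharP F.
exists p; move: (card_pprimeChar charFp); case: (logn _ _) => [|m] cardF.
  by have := finNzRing_gt1 F; rewrite cardF.
by exists m.
Qed.

Lemma card_natr : (#|F|%:R : F) = 0.
Proof.
have [p [m [charFp ->]]] := card_char_power.
by rewrite natrX (pcharf0 charFp) expr0n.
Qed.

(* The characteristic divides C(q, 2); for p = 2 this needs q >= 4. *)
Lemma char_dvd_bin2_card : exists2 p, p \in [pchar F] & (p %| 'C(#|F|, 2))%N.
Proof.
have [p [m [charFp cardF]]] := card_char_power.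
exists p => //; rewrite cardF.
have [p2|p_neq2] := eqVneq p 2%N.
  rewrite p2 in cardF *; rewrite bin2 expnS -mulnA mul2n doubleK.
  case: m cardF => [|m] cardF; first by move: card_ge3; rewrite cardF.
  by rewrite expnS -mulnA dvdn_mulr.
have odd_p : odd p.
  by case/even_prime: (pcharf_prime charFp) => // p2; rewrite p2 eqxx in p_neq2.
by rewrite bin2odd ?oddX ?odd_p ?orbT // expnS -mulnA dvdn_mulr.
Qed.

Let n := #|F|.-1.

Lemma card_pred : #|F| = n.+1.
Proof. by rewrite /n prednK // ltnW // ltnW. Qed.

Lemma n_gt1 : (1 < n)%N.
Proof. by rewrite /n -ltnS -card_pred. Qed.

Lemma card_sub2 : (#|F| - 2 = n.-1)%N.
Proof. by rewrite /n -!subn1 -subnDA. Qed.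

Lemma n_natr : (n%:R : F) = -1.
Proof. by apply/eqP; rewrite -addr_eq0 natr1 -card_pred card_natr. Qed.

(* sum_{k<q-1} k = C(q-1, 2) = C(q, 2) - (q - 1) = 1 in F. *)
Lemma sum_nat_n : \sum_(k < n) (k%:R : F) = 1.
Proof.
have [p charFp dvd_bin] := char_dvd_bin2_card.
have bin_eq0 : ('C(#|F|, 2)%:R : F) = 0.
  by case/dvdnP: dvd_bin => c ->; rewrite natrM (pcharf0 charFp) mulr0.
rewrite -natr_sum -(big_mkord xpredT (fun k => k)) bin2_sum.
move: bin_eq0; rewrite card_pred binS bin1 natrD => /eqP.
by rewrite addr_eq0 n_natr opprK => /eqP.
Qed.

Lemma expr_n (a : F) : a != 0 -> a ^+ n = 1.
Proof.
by move=> a0; apply: (mulfI a0); rewrite mulr1 -exprS -card_pred expf_card.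
Qed.

Lemma geometric_sum_generic (a : F) :
  a != 0 -> a != 1 -> \sum_(k < n) a ^+ k = 0.
Proof.
move=> a0 a1; have /eqP := subrX1 a n.
by rewrite expr_n // subrr eq_sym mulf_eq0 subr_eq0 (negbTE a1) => /eqP.
Qed.

Lemma geometric_sum0 : \sum_(k < n) (0 : F) ^+ k = 1.
Proof.
have := n_gt1; case: n => // m _.
by rewrite big_ord_recl expr0 big1 ?addr0 // => i _; rewrite expr0n.
Qed.

Lemma weighted_sum_generic (a : F) :
  a != 0 -> a != 1 -> \sum_(k < n) (k%:R * a ^+ k) = (1 - a)^-1.
Proof.
move=> a0 a1; have := weighted_geometric_sum a n.
rewrite expr_n // geometric_sum_generic // n_natr => sumE.
have a1' : 1 - a != 0 by rewrite subr_eq0 eq_sym.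
by apply: (mulfI a1'); rewrite sumE divff //; ring.
Qed.

Lemma weighted_sum0 : \sum_(k < n) ((k%:R : F) * 0 ^+ k) = 0.
Proof. by rewrite big1 // => [[[|k] ?]] _; rewrite ?mul0r // expr0n mulr0. Qed.

Lemma weighted_sum1 : \sum_(k < n) ((k%:R : F) * 1 ^+ k) = 1.
Proof.
by rewrite -[RHS]sum_nat_n; apply: eq_bigr => i _; rewrite expr1n mulr1.
Qed.

Lemma hbar_horner (a : F) :
  (hbarpoly F).[a] = 1 + a - \sum_(k < n) (k%:R * a ^+ k).
Proof.
rewrite /hbarpoly subn1 !hornerE horner_sum -sumrN; congr (_ + _).
by apply: eq_bigr => i _; rewrite hornerZ hornerXn mulNr.
Qed.

Lemma h_horner (b : F) : (hpoly F).[b] = \sum_(k < n.-1) ((k.+1)%:R * b ^+ k).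
Proof.
rewrite /hpoly card_sub2 horner_sum.
by apply: eq_bigr => i _; rewrite hornerZ hornerXn.
Qed.

Lemma t_horner (a : F) : (tpoly F).[a] = a + \sum_(k < n) a ^+ k.
Proof.
rewrite /tpoly subn1 !hornerE horner_sum; congr (_ + _).
by apply: eq_bigr => i _; rewrite hornerXn.
Qed.

Lemma hbar0 : (hbarpoly F).[0] = 1.
Proof. by rewrite hbar_horner weighted_sum0 !subr0 addr0. Qed.

Lemma hbar1 : (hbarpoly F).[1] = 1.
Proof. by rewrite hbar_horner weighted_sum1 addrK. Qed.

Lemma h0 : (hpoly F).[0] = 1.
Proof.
rewrite h_horner; have := n_gt1; case: n => [|[|m]] // _.
by rewrite big_ord_recl mulr1 big1 ?addr0 // => i _; rewrite expr0n mulr0.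
Qed.

Lemma mul_h_horner (b : F) :
  b * (hpoly F).[b] = \sum_(k < n) (k%:R * b ^+ k).
Proof.
by rewrite h_horner mul_shifted_weighted_sum prednK // ltnW // n_gt1.
Qed.

Lemma h_comp_inverse_horner (a : F) :
  (hpoly F \Po 'X^(#|F| - 2)).[a] = (hbarpoly F).[a].
Proof.
rewrite horner_comp hornerXn card_sub2.
have [->|a0] := eqVneq a 0.
  by rewrite expr0n -subn1 subn_eq0 leqNgt n_gt1 h0 hbar0.
have [->|a1] := eqVneq a 1.
  by rewrite expr1n -[LHS]mul1r mul_h_horner weighted_sum1 hbar1.
set b := a ^+ n.-1.
have ab : a * b = 1 by rewrite /b -exprS prednK ?expr_n // (ltnW n_gt1).
have b_inv : b = a^-1 by apply: (mulfI a0); rewrite ab mulfV.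
have b0 : b != 0 by rewrite b_inv invr_eq0.
have b1 : b != 1 by apply/eqP => b1; move: a1; rewrite -ab b1 mulr1 eqxx.
have hb : (hpoly F).[b] = a * (1 - b)^-1.
  apply: (mulfI b0); rewrite mul_h_horner weighted_sum_generic //.
  by rewrite mulrA [b * a]mulrC ab mul1r.
rewrite hb hbar_horner weighted_sum_generic // b_inv.
have a1' : 1 - a != 0 by rewrite subr_eq0 eq_sym.
have a1'' : a - 1 != 0 by rewrite subr_eq0.
by field; rewrite a0 a1' a1''.
Qed.

(* Part (2): t swaps 0 and 1 and fixes every other point. *)
Lemma hbar_comp_t_horner (a : F) :
  (hbarpoly F \Po tpoly F).[a] = (hbarpoly F).[a].
Proof.
rewrite horner_comp t_horner.
have [->|a0] := eqVneq a 0; first by rewrite geometric_sum0 add0r hbar1 hbar0.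
have [->|a1] := eqVneq a 1.
  rewrite (eq_bigr (fun _ => 1)) => [|i _]; last by rewrite expr1n.
  by rewrite sumr_const card_ord n_natr subrr hbar0 hbar1.
by rewrite geometric_sum_generic // addr0.
Qed.

End FiniteField.

Theorem mainTheorem1 (F : finFieldType) (hq : (3 <= #|F|)%N) :
  congr_xqx (hpoly F \Po 'X^(#|F| - 2)) (hbarpoly F) /\
  congr_xqx (hbarpoly F \Po tpoly F) (hbarpoly F).
Proof.
by split => a; [exact: h_comp_inverse_horner | exact: hbar_comp_t_horner].
Qed.
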